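(* Let $T$ be a Galton–Watson tree with finite alphabet $\mathbb{A}$ and offspring distribution $W$, and let $\mathscr{A}$ be a nonempty collection of nonempty subsets of $\mathbb{A}$. Define $g_{\mathscr{A}}:[0,1]\to[0,1]$ by $g_{\mathscr{A}}(s)=\mathbb{P}(W^{(s)}\notin\overline{\mathscr{A}})$ and $\tau(\mathscr{A})=\mathbb{P}(T\text{ has an }\mathscr{A}\text{-subtree})$. Then $1-\tau(\mathscr{A})$ is the smallest fixed point of $g_{\mathscr{A}}$ in $[0,1]$.
   Context: Trees with alphabet $\mathbb{A}$ are prefix-closed subsets of $\mathbb{A}^*$ containing the empty word; for $a\in T$, $W_T(a)=\{i\in\mathbb{A}: ai\in T\}$. The Galton–Watson tree with offspring distribution $W$ (a random subset of $\mathbb{A}$ with $\mathbb{P}(i\in W)>0$ for all $i$) is $T_0=\{\emptyset\}$, $T_n=\{aj:a\in T_{n-1},j\in W_a\}$, $(W_a)$ independent copies of $W$. An $\mathscr{A}$-subtree of $T$ is a tree $S\subseteq T$ with $W_S(a)\in\mathscr{A}$ for all $a\in S$. $\overline{\mathscr{A}}=\{S\subseteq\mathbb{A}:\exists X\in\mathscr{A},\ X\subseteq S\}$. For a random subset $X$ of a finite set $A$ and $s\in[0,1]$, $X^{(s)}=X\cap Y$ where $Y$ is independent of $X$ and $Y\sim\mathrm{Bin}(A,1-s)$, i.e. $\mathbb{P}(Y=B)=(1-s)^{|B|}s^{|A\setminus B|}$ for $B\subseteq A$. *)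

From HB Require Import structures.
From mathcomp Require Import all_boot all_order all_algebra.
From mathcomp Require Import all_classical all_reals all_analysis.
Set Implicit Arguments. Unset Strict Implicit. Unset Printing Implicit Defensive.
Import Order.TTheory GRing.Theory Num.Theory.
Local Open Scope classical_set_scope.
Local Open Scope ring_scope.

Section GW.
Variables (A : finType) (R : realType).

Definition Abar (Acal : {set {set A}}) (S : {set A}) : bool :=
  [exists X in Acal, X \subset S].

(* Law of X^{(s)} = X \cap Y, where X has law p (p B = P(X = B)) and
   Y ~ Bin(A, 1 - s) is independent of X:
   P(X^{(s)} = C) = sum_{B,Y} [C = B \cap Y] p(B) (1-s)^{|Y|} s^{|A \ Y|}. *)
Definition thin_law (p : {set A} -> R) (s : R) (C : {set A}) : R :=
  \sum_(B : {set A}) \sum_(Y : {set A})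
     (if C == B :&: Y then p B * (1 - s) ^+ #|Y| * s ^+ #|~: Y| else 0).

Definition gA (Acal : {set {set A}}) (p : {set A} -> R) (s : R) : R :=
  \sum_(C : {set A} | ~~ Abar Acal C) thin_law p s C.

(* The Galton-Watson tree built from the offspring sets (W_a)_a:
   w = w_0 ... w_{n-1} is in T iff w_k \in W_{w_0...w_{k-1}} for all k < n. *)
Definition GW_tree (W : seq A -> {set A}) : set (seq A) :=
  [set w | forall k : 'I_(size w), tnth (in_tuple w) k \in W (take k w)].

(* S is an Acal-subtree of T: a tree (contains the empty word, prefix-closed)
   contained in T with W_S(a) \in Acal for every a \in S.
   The word "a i" is rcons a i. *)
Definition is_subtree (Acal : {set {set A}}) (T S : set (seq A)) : Prop :=
  [/\ S [::],
      (forall a i, S (rcons a i) -> S a),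
      S `<=` T &
      (forall a, S a -> finset (fun i : A => `[< S (rcons a i) >]) \in Acal)].

End GW.

From HB Require Import structures.
From mathcomp Require Import all_boot all_order all_algebra.
From mathcomp Require Import all_classical all_reals all_analysis.
From mathcomp Require Import zify lra.
Import Order.TTheory GRing.Theory Num.Theory.
Import numFieldNormedType.Exports.
Set Implicit Arguments. Unset Strict Implicit. Unset Printing Implicit Defensive.

Local Open Scope classical_set_scope.
Local Open Scope ring_scope.

(* Let [q_n] be the probability that the tree has no [Acal]-subtree of height
   [n].  The root has one of height [n+1] iff the set of its children carrying
   one of height [n] lies in [Abar Acal]; the children's subtrees are
   independent, so that set is distributed as [W^{(q_n)}] and
   [q_(n+1) = g(q_n)], i.e. [q_n = g^n(0)].  Since [A] is finite, a König
   argument shows that the tree has an [Acal]-subtree iff it has one of every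
   height, so [q_n] increases to [1 - tau], a fixed point of the polynomial
   [g].  Minimality follows by running the same recursion with a modified
   law in generation [n], for which the failure probability is
   [g^n(x) = x >= q_n] when [x] is a fixed point.  All probabilities involved
   depend on finitely many [W_a] and are computed as iterated finite sums. *)

Section ProductExpectation.
Variables (A : finType) (R : realType).
Implicit Types (F : seq A -> {set A}) (s : seq (seq A)).

Definition update F a B : seq A -> {set A} := fun x => if x == a then B else F x.

Definition depends_on {T : Type} (D : pred (seq A)) (h : (seq A -> {set A}) -> T) :=
  forall F F', (forall x, D x -> F x = F' x) -> h F = h F'.

Lemma depends_on_sub {T : Type} (D D' : pred (seq A)) (h : (seq A -> {set A}) -> T) :
  depends_on D h -> (forall x, D x -> D' x) -> depends_on D' h.
Proof. by move=> hD DD' F F' eqF; apply: hD => x /DD'; apply: eqF. Qed.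

Lemma depends_onT {T : Type} (h : (seq A -> {set A}) -> T) : depends_on predT h.
Proof. by move=> F F' eqF; congr h; apply: funext => x; apply: eqF. Qed.

Variable w : seq A -> {set A} -> R.

Fixpoint expect s (h : (seq A -> {set A}) -> R) F : R :=
  if s is a :: s' then \sum_B w a B * expect s' h (update F a B) else h F.

Lemma expect_cons a s h F :
  expect (a :: s) h F = \sum_B w a B * expect s h (update F a B).
Proof. by []. Qed.

Lemma eq_expect s h h' F : h =1 h' -> expect s h F = expect s h' F.
Proof.
elim: s F => [|a s IH] F eqh /=; first exact: eqh.
by apply: eq_bigr => B _; rewrite IH.
Qed.

Lemma expect_depends_on s D h :
  depends_on D h -> depends_on (fun x => D x && (x \notin s)) (expect s h).
Proof.
elim: s D h => [|a s IH] D h hD F F' eqF /=.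
  by apply: hD => x Dx; apply: eqF; rewrite Dx.
apply: eq_bigr => B _; congr (_ * _).
apply: (IH D h hD) => x /andP[Dx xs]; rewrite /update; case: eqP => // /eqP xa.
by apply: eqF; rewrite Dx in_cons negb_or xa xs.
Qed.

Lemma expect_mull s D h1 h2 F : depends_on D h1 -> (forall x, x \in s -> ~~ D x) ->
  expect s (fun F => h1 F * h2 F) F = h1 F * expect s h2 F.
Proof.
move=> hD; elim: s F => [|a s IH] F sD //=.
rewrite mulr_sumr; apply: eq_bigr => B _.
rewrite IH; last by move=> x xs; apply: sD; rewrite in_cons xs orbT.
rewrite mulrCA; congr (_ * (_ * _)); apply: hD => x Dx; rewrite /update.
case: eqP => // xa; move: (sD a); rewrite in_cons eqxx /= => /(_ isT).
by rewrite -xa => /negP /(_ Dx).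
Qed.

Lemma expectZ s c h F : expect s (fun F => c * h F) F = c * expect s h F.
Proof. by apply: (@expect_mull s pred0). Qed.

Lemma expect_cat s s' h F : expect (s ++ s') h F = expect s (expect s' h) F.
Proof. by elim: s F => [|a s IH] F //=; apply: eq_bigr => B _; rewrite IH. Qed.

Lemma expectD s h1 h2 F :
  expect s (fun F => h1 F + h2 F) F = expect s h1 F + expect s h2 F.
Proof.
elim: s F => [|a s IH] F //=.
by rewrite -big_split /=; apply: eq_bigr => B _; rewrite IH mulrDr.
Qed.

Lemma expect_sum (I : finType) s (h : I -> (seq A -> {set A}) -> R) F :
  expect s (fun F => \sum_i h i F) F = \sum_i expect s (h i) F.
Proof.
elim: s F => [|a s IH] F //=.
by rewrite exchange_big /=; apply: eq_bigr => B _; rewrite IH mulr_sumr.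
Qed.

Lemma expect_prod (I : seq A) (L : A -> seq (seq A))
    (h : A -> (seq A -> {set A}) -> R) F :
  uniq I -> (forall i, depends_on (fun x => x \in L i) (h i)) ->
  (forall i j x, i != j -> x \in L i -> x \notin L j) ->
  expect (flatten (map L I)) (fun F => \prod_(i <- I) h i F) F
  = \prod_(i <- I) expect (L i) (h i) F.
Proof.
move=> + hD disjL; elim: I F => [|i I IH] F /=; first by rewrite !big_nil.
case/andP => iI uI; rewrite expect_cat big_cons.
have expect_rest F' : \prod_(j <- I) expect (L j) (h j) F' =
                      \prod_(j <- I) expect (L j) (h j) F.
  apply: eq_bigr => j _; apply: (expect_depends_on (hD j)) => x.
  by rewrite andbN.
have expect_tail F' : expect (flatten (map L I)) (fun F => \prod_(j <- i :: I) h j F) F'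
    = \prod_(j <- I) expect (L j) (h j) F * h i F'.
  under eq_expect do rewrite big_cons.
  rewrite (expect_mull _ _ (hD i)) ?IH ?expect_rest 1?mulrC //.
  move=> x /flattenP[_ /mapP[j jI ->] xj].
  by apply: (disjL j) => //; apply: contraNneq iI => <-.
by under eq_expect do rewrite expect_tail; rewrite expectZ mulrC.
Qed.

Hypothesis w_sum1 : forall a, \sum_B w a B = 1.
Hypothesis w_ge0 : forall a B, 0 <= w a B.

Lemma expect_cst s c F : expect s (fun _ => c) F = c.
Proof.
elim: s F => [|a s IH] F //=.
by under eq_bigr do rewrite IH; rewrite -mulr_suml w_sum1 mul1r.
Qed.

Lemma expect_1B s h F : expect s (fun F => 1 - h F) F = 1 - expect s h F.
Proof.
rewrite expectD expect_cst; congr (_ + _).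
by rewrite (@eq_expect _ _ (fun F => -1 * h F)) ?expectZ ?mulN1r // => ?; rewrite mulN1r.
Qed.

Lemma ler_expect s h h' F : (forall F, h F <= h' F) -> expect s h F <= expect s h' F.
Proof.
elim: s F => [|a s IH] F hh /=; first exact: hh.
by apply: ler_sum => B _; apply: ler_wpM2l => //; apply: IH.
Qed.

Lemma expect_undup s h F : expect s h F = expect (undup s) h F.
Proof.
elim: s F => [|a s IH] F //=.
case: ifP => [as_|_] /=; last by apply: eq_bigr => B _; rewrite IH.
have expect_update B : expect s h (update F a B) = expect s h F.
  apply: (expect_depends_on (depends_onT h)) => x /= xs; rewrite /update.
  by case: eqP => // xa; rewrite xa as_ in xs.
by under eq_bigr do rewrite expect_update; rewrite -mulr_suml w_sum1 mul1r IH.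
Qed.

End ProductExpectation.
Arguments expect {A R}.
Arguments update {A}.
Arguments depends_on {A T}.

Section Thinning.
Variables (A : finType) (R : realType) (Acal : {set {set A}}).

Lemma AbarS (S S' : {set A}) : S \subset S' -> Abar Acal S -> Abar Acal S'.
Proof.
move=> SS' /existsP[X /andP[XA XS]]; apply/existsP; exists X.
by rewrite XA (fintype.subset_trans XS SS').
Qed.

Lemma gAE (p : {set A} -> R) u : gA Acal p u =
  \sum_B \sum_(Y : {set A})
    (~~ Abar Acal (B :&: Y))%:R * (p B * (1 - u) ^+ #|Y| * u ^+ #|~: Y|).
Proof.
rewrite /gA /thin_law big_mkcond /=.
under eq_bigr do rewrite -mulrb -mulr_natl mulr_sumr; rewrite exchange_big.
apply: eq_bigr => B _; under eq_bigr do rewrite mulr_sumr; rewrite exchange_big.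
apply: eq_bigr => Y _; rewrite (bigD1 (B :&: Y)) //= eqxx big1 ?addr0 // => C.
by move=> /negbTE->; rewrite mulr0.
Qed.

Lemma prodr_mem_eq (f : A -> bool) (C : {set A}) :
  \prod_i (f i == (i \in C))%:R = ([set i | f i]%SET == C)%:R :> R.
Proof.
have [/forallP fC|/forallPn[i fiC]] := boolP [forall i, f i == (i \in C)].
  have -> : [set i | f i]%SET = C by apply/setP => i; rewrite inE; apply/eqP/fC.
  by rewrite eqxx big1 // => i _; rewrite fC.
rewrite (bigD1 i) //= (negbTE fiC) mul0r; case: eqP => // fE.
by rewrite -fE inE eqxx in fiC.
Qed.

Lemma sum_set_pattern (f : A -> bool) (phi : {set A} -> R) :
  \sum_C phi C * \prod_i (f i == (i \in C))%:R = phi [set i | f i]%SET.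
Proof.
under eq_bigr do rewrite prodr_mem_eq.
rewrite (bigD1 [set i | f i]%SET) //= eqxx mulr1 big1 ?addr0 // => C.
by rewrite eq_sym => /negbTE->; rewrite mulr0.
Qed.

Lemma prodr_mem_if (C : {set A}) (x y : R) :
  \prod_i (if i \in C then x else y) = x ^+ #|C| * y ^+ #|~: C|.
Proof.
rewrite (bigID (mem C)) /=; congr (_ * _).
  by rewrite (eq_bigr (fun _ => x)) ?prodr_const // => i ->.
rewrite (eq_bigr (fun _ => y)) => [|i /negbTE-> //].
by rewrite -prodr_const; apply: eq_bigl => i; rewrite inE.
Qed.

End Thinning.

Section TruncatedSubtrees.
Variables (A : finType) (Acal : {set {set A}}).
Implicit Types (F : seq A -> {set A}) (a : seq A).

Fixpoint descendants m a : seq (seq A) :=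
  if m is m'.+1 then a :: flatten [seq descendants m' (rcons a i) | i <- index_enum A]
  else [:: a].

Definition strict_descendants m a :=
  flatten [seq descendants m (rcons a i) | i <- index_enum A].

Lemma descendantsS m a : descendants m.+1 a = a :: strict_descendants m a.
Proof. by []. Qed.

Lemma descendantsP m a x :
  x \in descendants m a -> exists2 b, x = a ++ b & (size b <= m)%N.
Proof.
elim: m a => [|m IH] a /=.
  by rewrite inE => /eqP ->; exists [::]; rewrite ?cats0.
rewrite in_cons => /orP[/eqP ->|]; first by exists [::]; rewrite ?cats0.
move=> /flattenP[l /mapP[i _ ->] /IH[b -> sb]].
by exists (i :: b); rewrite ?cat_rcons.
Qed.

Lemma descendants_disjoint m a i j x :
  i != j -> x \in descendants m (rcons a i) -> x \notin descendants m (rcons a j).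
Proof.
move=> ij /descendantsP[b -> _]; apply/negP => /descendantsP[b' + _].
move/eqP; rewrite !cat_rcons eqseq_cat // eqseq_cons => /andP[_ /andP[/eqP eij _]].
by rewrite eij eqxx in ij.
Qed.

Lemma root_notin_strict_descendants m a : a \notin strict_descendants m a.
Proof.
apply/negP => /flattenP[_ /mapP[i _ ->] /descendantsP[b /(congr1 size)]].
by rewrite size_cat size_rcons; lia.
Qed.

Lemma descendants_rcons m a i x :
  x \in descendants m (rcons a i) -> x \in descendants m.+1 a.
Proof.
move=> xD; rewrite /= in_cons; apply/orP; right; apply/flattenP.
by exists (descendants m (rcons a i)) => //; apply/map_f; rewrite mem_index_enum.
Qed.

(* [F] has an [Acal]-subtree of height [m] rooted at [a] whose vertices at
   height [m] have offspring sets satisfying [bt]. *)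
Fixpoint has_subtree_upto (bt : pred {set A}) F a m : bool :=
  if m is m'.+1 then
    Abar Acal [set i in F a | has_subtree_upto bt F (rcons a i) m']%SET
  else bt (F a).

Lemma has_subtree_upto_depends_on bt m a :
  depends_on (fun x => x \in descendants m a) (fun F => has_subtree_upto bt F a m).
Proof.
elim: m a => [|m IH] a F F' eqF /=; first by rewrite eqF // inE.
rewrite eqF ?mem_head //; congr (Abar Acal _); apply/setP => i; rewrite !inE.
by congr (_ && _); apply: IH => x /descendants_rcons; apply: eqF.
Qed.

Lemma has_subtree_upto_predT bt F a m :
  has_subtree_upto bt F a m -> has_subtree_upto xpredT F a m.
Proof.
elim: m a => [|m IH] a //=; apply: AbarS.
by apply/fintype.subsetP => i; rewrite !inE => /andP[-> /IH].
Qed.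

Lemma has_subtree_upto_leq F a m n : (m <= n)%N ->
  has_subtree_upto xpredT F a n -> has_subtree_upto xpredT F a m.
Proof.
elim: n m a => [|n IH] [|m] a //= mn; apply: AbarS.
by apply/fintype.subsetP => i; rewrite !inE => /andP[-> /IH ->].
Qed.

End TruncatedSubtrees.

Section Recursion.
Variables (A : finType) (R : realType) (Acal : {set {set A}}).
Local Notation has := (has_subtree_upto Acal).

Section Step.
Variable w : seq A -> {set A} -> R.
Hypothesis w_sum1 : forall a, \sum_B w a B = 1.

Lemma expect_no_subtree_step bt m a u F :
  (forall i F, expect w (descendants m (rcons a i))
                 (fun F => (~~ has bt F (rcons a i) m)%:R) F = u) ->
  expect w (strict_descendants m a) (fun F => (~~ has bt F a m.+1)%:R) F
  = \sum_C (~~ Abar Acal (F a :&: C))%:R * ((1 - u) ^+ #|C| * u ^+ #|~: C|).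
Proof.
move=> IH.
(* Condition on the set [C] of children carrying subtrees of height [m]: the
   factors for distinct children involve disjoint sets of words. *)
have split_root F0 : (~~ has bt F0 a m.+1)%:R = \sum_C
    (~~ Abar Acal (F0 a :&: C))%:R
    * \prod_i (has bt F0 (rcons a i) m == (i \in C))%:R :> R.
  by rewrite sum_set_pattern /= setIdE.
under eq_expect do rewrite split_root.
rewrite expect_sum; apply: eq_bigr => C _ /=.
rewrite (@expect_mull _ _ w _ (pred1 a) (fun F => (~~ Abar Acal (F a :&: C))%:R));
  first last.
- by move=> x; apply: contraTneq => ->; apply: root_notin_strict_descendants.
- by move=> F1 F2 eqF; rewrite eqF //= eqxx.
congr (_ * _); rewrite /strict_descendants expect_prod; first last.
- by move=> i j x; apply: descendants_disjoint.
- by move=> i F1 F2 /has_subtree_upto_depends_on ->.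
- exact: index_enum_uniq.
rewrite -prodr_mem_if; apply: eq_bigr => i _.
case: (i \in C); rewrite -(IH i F) -?(expect_1B w_sum1);
  by apply: eq_expect => F0; case: has; rewrite /= ?subr0 ?subrr.
Qed.

End Step.

Section LevelLaw.
Variables (p q : {set A} -> R) (N : nat).
Hypotheses (p_sum1 : \sum_B p B = 1) (q_sum1 : \sum_B q B = 1).

Definition level_law (x : seq A) := if (size x < N)%N then p else q.

Lemma level_law_sum1 x : \sum_B level_law x B = 1.
Proof. by rewrite /level_law; case: ifP. Qed.

Lemma expect_no_subtree_level bt m a F : (size a + m)%N = N ->
  expect level_law (descendants m a) (fun F => (~~ has bt F a m)%:R) F
  = iter m (gA Acal p) (\sum_B q B * (~~ bt B)%:R).
Proof.
elim: m a F => [|m IH] a F sizeN.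
  rewrite addn0 in sizeN; rewrite /= /level_law sizeN ltnn.
  by apply: eq_bigr => B _; rewrite /update eqxx.
rewrite iterS; set u := iter m _ _.
have children_no_subtree i F' : expect level_law (descendants m (rcons a i))
    (fun F => (~~ has bt F (rcons a i) m)%:R) F' = u.
  by apply: IH; rewrite size_rcons addSnnS.
rewrite descendantsS expect_cons gAE {1}/level_law ifT; last by lia.
apply: eq_bigr => B _.
rewrite (expect_no_subtree_step level_law_sum1 _ children_no_subtree).
rewrite /update eqxx mulr_sumr; apply: eq_bigr => Y _.
by rewrite mulrCA !mulrA.
Qed.

End LevelLaw.

Section Iterates.
Variable p : {set A} -> R.
Hypotheses (p_sum1 : \sum_B p B = 1) (p_ge0 : forall B, 0 <= p B).

Lemma expect_has_subtree_upto n F :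
  expect (fun _ => p) (descendants n [::]) (fun F => (has xpredT F [::] n)%:R) F
  = 1 - iter n (gA Acal p) 0.
Proof.
have := expect_no_subtree_level p_sum1 p_sum1 xpredT (a := [::]) F (add0n n).
have -> : level_law p p n = fun _ => p by apply/funext => x; rewrite /level_law; case: ifP.
rewrite big1 => [<-|B _]; last by rewrite mulr0.
rewrite -expect_1B //; apply: eq_expect => F'.
by case: has; rewrite /= ?subr0 ?subrr.
Qed.

(* Give every vertex of generation [n] all of [A] as offspring with
   probability [1 - x] and no offspring at all otherwise.  Asking for full
   offspring at height [n] fails with probability [iter n g x = x], and is
   more demanding than [xpredT], which fails with probability [iter n g 0]. *)
Lemma iter_gA_le_fixpoint x n : finset.set0 != [set: A]%SET ->
  0 <= x <= 1 -> gA Acal p x = x -> iter n (gA Acal p) 0 <= x.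
Proof.
move=> set0_neqT /andP[x_ge0 x_le1] gx.
pose q B : R :=
  (if B == [set: A]%SET then 1 - x else 0) + (if B == finset.set0 then x else 0).
have q_sum1 : \sum_B q B = 1.
  by rewrite big_split /= -!big_mkcond /= !big_pred1_eq subrK.
have q_not_full : \sum_B q B * (B != [set: A]%SET)%:R = x.
  rewrite (bigD1 finset.set0) //= big1 ?addr0 => [|B /negbTE B_neq0].
    by rewrite /q (negbTE set0_neqT) eqxx add0r mulr1.
  by rewrite /q B_neq0 addr0; case: (B == _); rewrite ?mulr0 ?mul0r.
have law_ge0 a B : 0 <= level_law p q n a B.
  rewrite /level_law; case: ifP => _ //; rewrite /q.
  by apply: addr_ge0; case: ifP; rewrite ?subr_ge0.
have := expect_no_subtree_level p_sum1 q_sum1 xpredT (a := [::])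
  (fun=> finset.set0) (add0n n).
rewrite big1 => [<-|B _]; last by rewrite mulr0.
have := expect_no_subtree_level p_sum1 q_sum1 (pred1 [set: A]%SET) (a := [::])
  (fun=> finset.set0) (add0n n).
rewrite q_not_full iter_fix // => <-; apply: ler_expect => // F.
rewrite ler_nat; have := @has_subtree_upto_predT _ Acal (pred1 [set: A]%SET) F [::] n.
by case: has; case: has => // /(_ isT).
Qed.

End Iterates.
End Recursion.

Lemma fsbigT_finType (R : realType) (T : finType) (f : T -> \bar R) :
  (\sum_(i \in [set: T]) f i = \sum_(i : T) f i)%E.
Proof.
rewrite (fsbigE (index_enum T)) ?index_enum_uniq //.
- by apply: eq_bigl => i; rewrite in_setT.
- by move=> i _; rewrite mem_index_enum.
Qed.

Section CylinderEvents.
Variables (A : finType) (R : realType) (d : measure_display)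
  (Omega : measurableType d) (P : probability Omega R)
  (W : seq A -> Omega -> {set A}) (p : {set A} -> R).
Hypothesis W_measurable : forall (a : seq A) (B : {set A}),
  measurable [set w : Omega | W a w = B].
Hypothesis W_indep : forall (s : seq (seq A)) (f : seq A -> {set A}), uniq s ->
  P (\bigcap_(a in [set` s]) [set w : Omega | W a w = f a])
  = (\prod_(a <- s) (p (f a))%:E)%E.
Implicit Types (r s : seq (seq A)) (G : seq A -> {set A})
  (Q : (seq A -> {set A}) -> bool).

Definition event Q : set Omega := [set w | Q (W ^~ w)].

Definition cylinder r G : set Omega :=
  \bigcap_(a in [set` r]) [set w | W a w = G a].

Lemma cylinder_nil G : cylinder [::] G = setT.
Proof. by rewrite /cylinder set_nil bigcap_set0. Qed.

Lemma cylinder_cons a r G :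
  cylinder (a :: r) G = [set w | W a w = G a] `&` cylinder r G.
Proof.
apply/seteqP; split => w /=.
  by move=> Gw; split => [|b br]; apply: Gw; rewrite /= in_cons ?eqxx ?br ?orbT.
by move=> [Gaw Gw] b; rewrite /= in_cons => /orP[/eqP -> //|]; apply: Gw.
Qed.

Lemma cylinder_update r G a B : a \notin r -> cylinder r (update G a B) = cylinder r G.
Proof.
move=> ar; apply/seteqP; split => w /= Gw b br; have := Gw b br;
  by rewrite /update; case: eqP => // ba; rewrite -ba br in ar.
Qed.

Lemma cylinder_measurable r G : measurable (cylinder r G).
Proof.
elim: r => [|a r IH]; first by rewrite cylinder_nil.
by rewrite cylinder_cons; apply: measurableI.
Qed.

Lemma measure_cylinder r G : uniq r -> P (cylinder r G) = (\prod_(a <- r) p (G a))%:E.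
Proof. by move=> ur; rewrite /cylinder W_indep // prodEFin. Qed.

Lemma measure_event_cylinder_determined r G Q :
  uniq r -> depends_on (fun x => x \in r) Q ->
  measurable (event Q `&` cylinder r G) /\
  P (event Q `&` cylinder r G) = ((Q G)%:R * \prod_(a <- r) p (G a))%:E.
Proof.
move=> ur rQ; have QG w : cylinder r G w -> Q (W ^~ w) = Q G.
  by move=> Gw; apply: rQ => x /= xr; apply: Gw.
have [QGT|QGF] := boolP (Q G).
  have -> : event Q `&` cylinder r G = cylinder r G.
    by apply/seteqP; split => [w []//|w Gw]; split; rewrite // /event /= QG.
  by split; [apply: cylinder_measurable | rewrite measure_cylinder // mul1r].
have -> : event Q `&` cylinder r G = set0.
  by apply/seteqP; split => // w [+ /QG QGw]; rewrite /event /= QGw (negbTE QGF).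
by split; [apply: measurable0 | rewrite measure0 mul0r].
Qed.

Lemma event_cylinder_bigcup a r G Q : a \notin r ->
  event Q `&` cylinder r G =
  \bigcup_(B in [set: {set A}]) (event Q `&` cylinder (a :: r) (update G a B)).
Proof.
move=> ar; apply/seteqP; split => w.
  move=> [Qw Gw]; exists (W a w) => //; split => //.
  by rewrite cylinder_cons cylinder_update //; split => //=; rewrite /update eqxx.
by move=> [B _ [Qw]]; rewrite cylinder_cons cylinder_update // => -[_ Gw].
Qed.

Lemma trivIset_event_cylinder a r G Q :
  trivIset [set: {set A}] (fun B => event Q `&` cylinder (a :: r) (update G a B)).
Proof.
move=> B1 B2 _ _ [w [[_ G1w] [_ G2w]]].
by move: G1w G2w; rewrite !cylinder_cons /= /update eqxx => -[<- _] [<- _].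
Qed.

Lemma measure_event_cylinder s r G Q :
  uniq s -> uniq r -> (forall x, x \in s -> x \notin r) ->
  depends_on (fun x => (x \in s) || (x \in r)) Q ->
  measurable (event Q `&` cylinder r G) /\
  P (event Q `&` cylinder r G)
  = (expect (fun _ => p) s (fun F => (Q F)%:R * \prod_(a <- r) p (F a)) G)%:E.
Proof.
elim: s r G => [|a s IH] r G us ur sr sQ.
  exact: measure_event_cylinder_determined.
case/andP: us => as_ us; have ar : a \notin r by apply: sr; rewrite mem_head.
have IHa B : measurable (event Q `&` cylinder (a :: r) (update G a B)) /\
    P (event Q `&` cylinder (a :: r) (update G a B)) =
    (expect (fun _ => p) s (fun F => (Q F)%:R * \prod_(x <- a :: r) p (F x))
       (update G a B))%:E.
  apply: IH => //; first by rewrite /= ar ur.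
    move=> x xs; rewrite in_cons negb_or sr ?andbT ?in_cons ?xs ?orbT //.
    by apply: contraNneq as_ => <-.
  by apply: (depends_on_sub sQ) => x; rewrite !in_cons; case: (x == a); rewrite ?orbT.
rewrite (event_cylinder_bigcup _ _ ar); split.
  by apply: fin_bigcup_measurable => [|B _]; [exact: finite_finset | case: (IHa B)].
rewrite measure_fin_bigcup; first last.
- by move=> B _; case: (IHa B).
- exact: trivIset_event_cylinder.
- exact: finite_finset.
rewrite fsbigT_finType (eq_bigr _ (fun B _ => proj2 (IHa B))).
rewrite sumEFin expect_cons; congr EFin; apply: eq_bigr => B _.
under eq_expect do rewrite big_cons mulrCA.
rewrite (@expect_mull _ _ _ _ (pred1 a) (fun F => p (F a))) ?/update ?eqxx //
  => [F1 F2 eqF|x xs].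
  by rewrite eqF //= eqxx.
by apply: contraNneq as_ => <-.
Qed.

Lemma law_sum1 : \sum_B p B = 1.
Proof.
have [_] := @measure_event_cylinder [:: [::]] [::] (fun=> finset.set0) xpredT
  isT isT (fun _ _ => isT) (fun _ _ _ => erefl).
have -> : event xpredT = setT by apply/seteqP.
rewrite cylinder_nil setIT probability_setT => -[->].
by apply: eq_bigr => B _; rewrite big_nil !mulr1.
Qed.

Lemma measure_event s Q G : depends_on (fun x => x \in s) Q ->
  measurable (event Q) /\
  P (event Q) = (expect (fun _ => p) s (fun F => (Q F)%:R) G)%:E.
Proof.
move=> sQ; have [] := @measure_event_cylinder (undup s) [::] G Q (undup_uniq s) isT.
- by [].
- by apply: (depends_on_sub sQ) => x; rewrite mem_undup orbF.
rewrite cylinder_nil setIT => Qmeas ->; split => //; congr EFin.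
rewrite [RHS](expect_undup (fun _ => law_sum1)).
by apply: eq_expect => F; rewrite big_nil mulr1.
Qed.

End CylinderEvents.

Section SubtreeExistence.
Variables (A : finType) (Acal : {set {set A}}).

Lemma GW_tree_nil (X : seq A -> {set A}) : GW_tree X [::].
Proof. by case. Qed.

Lemma GW_tree_rcons (X : seq A -> {set A}) a i :
  GW_tree X (rcons a i) <-> GW_tree X a /\ i \in X a.
Proof.
have take_rcons_size : take (size a) (rcons a i) = a by rewrite -cats1 take_size_cat.
have take_rcons_le n : (n <= size a)%N -> take n (rcons a i) = take n a.
  by move=> n_le; rewrite -cats1 takel_cat.
split.
- move=> Xai; split.
    move=> k; have k_lt : (k < size (rcons a i))%N by rewrite size_rcons ltnS ltnW.
    have := Xai (Ordinal k_lt); rewrite !(tnth_nth i) /= nth_rcons ltn_ord.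
    by rewrite take_rcons_le // ltnW.
  have a_lt : (size a < size (rcons a i))%N by rewrite size_rcons.
  have := Xai (Ordinal a_lt).
  by rewrite (tnth_nth i) /= nth_rcons ltnn eqxx take_rcons_size.
- move=> [Xa iX] k; rewrite (tnth_nth i) /=.
  have : (k < (size a).+1)%N by rewrite -(size_rcons a i); exact: ltn_ord.
  rewrite ltnS leq_eqVlt => /orP[/eqP ->|k_lt].
    by rewrite nth_rcons ltnn eqxx take_rcons_size.
  have := Xa (Ordinal k_lt); rewrite (tnth_nth i) /= nth_rcons k_lt take_rcons_le //.
  exact: ltnW.
Qed.

Variable F : seq A -> {set A}.
Local Notation has := (has_subtree_upto Acal xpredT F).

Lemma has_subtree_upto_of_subtree S :
  is_subtree Acal (GW_tree F) S -> forall m, has [::] m.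
Proof.
case=> S_nil _ S_sub S_Acal m; elim: m [::] S_nil => [|m IH] a Sa //=.
set Sa_children := finset (fun i => `[< S (rcons a i) >]).
have Abar_S : Abar Acal Sa_children.
  by apply/existsP; exists Sa_children; rewrite S_Acal // fintype.subxx.
apply: AbarS Abar_S; apply/fintype.subsetP => i; rewrite !inE => Sai.
by have /GW_tree_rcons[_ ->] := S_sub _ Sai; apply: IH.
Qed.

Definition has_all_heights a := forall m, has a m.

(* Since [A] is finite, the children lacking subtrees of some height all
   lack subtrees of one common height, the maximum of these heights. *)
Lemma has_all_heights_children a : has_all_heights a ->
  Abar Acal [set i in F a | `[< has_all_heights (rcons a i) >]]%SET.
Proof.
move=> a_all.
have /choice[n nP] i :
    exists n, `[< has_all_heights (rcons a i) >] || ~~ has (rcons a i) n.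
  have [i_all|] := pselect (has_all_heights (rcons a i)).
    by exists 0%N; apply/orP; left; apply/asboolP.
  by move/existsNP => [n ni]; exists n; apply/orP; right; apply/negP.
apply: AbarS (a_all (\max_i n i).+1).
apply/fintype.subsetP => i; rewrite !inE => /andP[-> i_has] /=.
case/orP: (nP i) => // /negP; case.
by apply: has_subtree_upto_leq i_has; apply: leq_bigmax.
Qed.

Definition subtree_children a : {set A} :=
  if [pick X in Acal | X \subset [set i in F a | `[< has_all_heights (rcons a i) >]]%SET]
  is Some X then X else finset.set0.

Lemma subtree_childrenP a : has_all_heights a ->
  subtree_children a \in Acal /\
  subtree_children a \subset [set i in F a | `[< has_all_heights (rcons a i) >]]%SET.
Proof.
move=> /has_all_heights_children /existsP[X0 /andP[X0A X0sub]].
rewrite /subtree_children; case: pickP => [X /andP[] //|none].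
by have := none X0; rewrite X0A X0sub.
Qed.

Lemma subtree_of_has_subtree_upto :
  (forall m, has [::] m) -> exists S, is_subtree Acal (GW_tree F) S.
Proof.
move=> root_all.
have all_heights a : GW_tree subtree_children a -> has_all_heights a.
  elim/last_ind: a => [//|a i IH] /GW_tree_rcons[/IH a_all i_in].
  have [_ /fintype.subsetP sub] := subtree_childrenP a_all.
  by have := sub i i_in; rewrite inE => /andP[_ /asboolP].
exists (GW_tree subtree_children); split.
- exact: GW_tree_nil.
- by move=> a i /GW_tree_rcons[].
- elim/last_ind => [|a i IH] ai_in; first exact: GW_tree_nil.
  have /GW_tree_rcons[a_in i_in] := ai_in.
  apply/GW_tree_rcons; split; first exact: IH.
  have [_ /fintype.subsetP sub] := subtree_childrenP (all_heights _ a_in).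
  by have := sub i i_in; rewrite inE => /andP[].
- move=> a a_in; have [XA _] := subtree_childrenP (all_heights _ a_in).
  suff -> : finset (fun i => `[< GW_tree subtree_children (rcons a i) >])
            = subtree_children a by [].
  apply/setP => i; rewrite inE; apply/asboolP/idP => [/GW_tree_rcons[] //|i_in].
  by apply/GW_tree_rcons.
Qed.

Lemma subtree_exists_iff :
  (exists S, is_subtree Acal (GW_tree F) S) <-> forall m, has [::] m.
Proof.
split; first by case=> S; apply: has_subtree_upto_of_subtree.
exact: subtree_of_has_subtree_upto.
Qed.

End SubtreeExistence.

Lemma gA_continuous (A : finType) (R : realType) (Acal : {set {set A}})
    (p : {set A} -> R) :
  continuous (gA Acal p).
Proof.
pose gp : {poly R} := \sum_(C : {set A} | ~~ Abar Acal C) \sum_B \sum_(Y : {set A})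
  (if C == B :&: Y then (p B)%:P * (1 - 'X) ^+ #|Y| * 'X ^+ #|~: Y| else 0).
have -> : gA Acal p = horner gp.
  apply/funext => s; rewrite /gA /thin_law horner_sum; apply: eq_bigr => C _.
  rewrite horner_sum; apply: eq_bigr => B _; rewrite horner_sum; apply: eq_bigr => Y _.
  by case: ifP; rewrite !hornerE.
exact: continuous_horner.
Qed.

Lemma fixpoint_of_cvg_iter (R : realType) (f : R -> R) x l : continuous f ->
  (fun n => iter n f x) @ \oo --> l -> f l = l.
Proof.
move=> f_cont iter_cvg.
have f_iter_cvg : (f \o (fun n => iter n f x)) @ \oo --> f l.
  exact: continuous_cvg (f_cont l) iter_cvg.
have iterS_cvg : (fun n => iter n.+1 f x) @ \oo --> l.
  by rewrite (cvg_shiftS (fun n => iter n f x)).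
exact: cvg_unique f_iter_cvg iterS_cvg.
Qed.

Section GaltonWatsonTree.
Variables (A : finType) (R : realType) (d : measure_display)
  (Omega : measurableType d) (P : probability Omega R)
  (W : seq A -> Omega -> {set A}) (p : {set A} -> R) (Acal : {set {set A}}).
Hypothesis W_measurable : forall (a : seq A) (B : {set A}),
  measurable [set w : Omega | W a w = B].
Hypothesis W_indep : forall (s : seq (seq A)) (f : seq A -> {set A}), uniq s ->
  P (\bigcap_(a in [set` s]) [set w : Omega | W a w = f a])
  = (\prod_(a <- s) (p (f a))%:E)%E.

Definition subtree_event : set Omega :=
  [set w | exists S : set (seq A), is_subtree Acal (GW_tree (W ^~ w)) S].

Local Notation upto_event n := (event W (fun F => has_subtree_upto Acal xpredT F [::] n)).

Lemma subtree_event_bigcap : subtree_event = \bigcap_n upto_event n.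
Proof.
apply/seteqP; split => w.
  by move=> /subtree_exists_iff w_has n _; apply: w_has.
by move=> w_has; apply/subtree_exists_iff => n; apply: w_has.
Qed.

Lemma measure_upto_event n :
  measurable (upto_event n) /\ P (upto_event n) = (1 - iter n (gA Acal p) 0)%:E.
Proof.
have [upto_meas ->] := measure_event W_measurable W_indep (fun=> finset.set0)
  (@has_subtree_upto_depends_on _ Acal xpredT n [::]).
by rewrite expect_has_subtree_upto // (law_sum1 W_measurable W_indep).
Qed.

Lemma subtree_event_measurable : measurable subtree_event.
Proof.
rewrite subtree_event_bigcap; apply: bigcapT_measurable => n.
by case: (measure_upto_event n).
Qed.

Lemma fine_subtree_event : (fine (P subtree_event))%:E = P subtree_event.
Proof.
rewrite fineK // ge0_fin_numE ?measure_ge0 //.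
by rewrite (le_lt_trans (probability_le1 _ subtree_event_measurable)) ?ltry.
Qed.

Lemma cvg_iter_gA :
  (fun n => iter n (gA Acal p) 0) @ \oo --> 1 - fine (P subtree_event).
Proof.
have : (fun n => (1 - iter n (gA Acal p) 0)%:E) @ \oo --> P subtree_event.
  have -> : (fun n => (1 - iter n (gA Acal p) 0)%:E) = P \o (fun n => upto_event n).
    by apply/funext => n /=; case: (measure_upto_event n).
  rewrite subtree_event_bigcap; apply: nonincreasing_cvg_mu.
  - by rewrite (le_lt_trans (probability_le1 _ (measure_upto_event 0).1)) ?ltry.
  - by move=> n; case: (measure_upto_event n).
  - by rewrite -subtree_event_bigcap; apply: subtree_event_measurable.
  - by move=> m n mn; apply/subsetPset => w; apply: has_subtree_upto_leq mn.
rewrite -fine_subtree_event => /fine_cvgP[_ cvg_1B].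
have -> : (fun n => iter n (gA Acal p) 0) = (fun n => 1 - (1 - iter n (gA Acal p) 0)).
  by apply/funext => n; rewrite subKr.
exact: cvgB (cvg_cst _) cvg_1B.
Qed.

End GaltonWatsonTree.

Theorem theorem2p10 (A : finType) (R : realType) (d : measure_display)
  (Omega : measurableType d) (P : probability Omega R)
  (W : seq A -> Omega -> {set A}) (p : {set A} -> R)
  (Acal : {set {set A}})
  (* each W_a is a random subset of A *)
  (hmeas : forall (a : seq A) (B : {set A}),
      measurable [set w : Omega | W a w = B])
  (* each W_a has law p (the offspring distribution of W) *)
  (hlaw : forall (a : seq A) (B : {set A}),
      P [set w : Omega | W a w = B] = (p B)%:E)
  (* the W_a are mutually independent *)
  (hindep : forall (s : seq (seq A)) (f : seq A -> {set A}), uniq s ->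
      P (\bigcap_(a in [set` s]) [set w : Omega | W a w = f a])
      = (\prod_(a <- s) (p (f a))%:E)%E)
  (* P(i \in W) > 0 for all i *)
  (hpos : forall i : A, 0 < \sum_(B : {set A} | i \in B) p B)
  (* Acal is a nonempty collection of nonempty subsets *)
  (hAne : Acal != finset.set0) (hA0 : finset.set0 \notin Acal) :
  let tau := fine (P [set w : Omega |
                 exists S : set (seq A), is_subtree Acal (GW_tree (W ^~ w)) S]) in
  [/\ 0 <= 1 - tau <= 1,
      gA Acal p (1 - tau) = 1 - tau &
      forall x : R, 0 <= x <= 1 -> gA Acal p x = x -> 1 - tau <= x].
Proof.
move=> tau; have tauE : tau%:E = P (subtree_event W Acal) :=
  fine_subtree_event Acal hmeas hindep.
have p_ge0 B : 0 <= p B by rewrite -lee_fin -(hlaw [::] B) measure_ge0.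
have set0_neqT : finset.set0 != [set: A]%SET.
  case/finset.set0Pn: hAne => X XA; apply/eqP => /setP set0_full.
  have /finset.set0Pn[i _] : X != finset.set0 by apply: contraNneq hA0 => <-.
  by have := set0_full i; rewrite !inE.
have iter_cvg : (fun n => iter n (gA Acal p) 0) @ \oo --> 1 - tau :=
  cvg_iter_gA hmeas hindep.
split.
- have : 0 <= tau <= 1.
    rewrite -!lee_fin tauE measure_ge0 probability_le1 //.
    exact: subtree_event_measurable Acal hmeas hindep.
  by move=> /andP[tau_ge0 tau_le1]; apply/andP; split; lra.
- exact: fixpoint_of_cvg_iter (@gA_continuous _ _ Acal p) iter_cvg.
- move=> x x01 gx; rewrite -(cvg_lim (@Rhausdorff R) iter_cvg).
  apply: limr_le; first exact: cvgP iter_cvg.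
  apply: nearW => n.
  exact: (iter_gA_le_fixpoint (law_sum1 hmeas hindep) p_ge0 n set0_neqT x01 gx).
Qed.
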